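(* Let $S_1,S_2\subseteq\mathbb{F}_q$ with $\#S_1=\#S_2=s$, let $\sigma\in\{0,\dots,s-1\}$, and let $\ell$ be a positive integer with $\ell\le\sigma+1$ such that $\ell$ is even if and only if $\sigma$ is odd. Then: (1) There exist $L_2\subsetneq L_1\subseteq\Delta(s,s)$ (namely those of the form $L_1=\{N\mid N\preceq_{\deg}X^iY^j\}$, $L_2=\{N\mid N\prec_{\deg}X^jY^i\}$ with $i=\frac{\sigma-\ell+1}{2}$, $j=\frac{\sigma+\ell-1}{2}$) with $\#L_1-\#L_2=\ell$ and $$M_1(C(L_1),C(L_2))=\Big(s-\tfrac{\sigma-\ell+1}{2}\Big)\Big(s-\tfrac{\sigma+\ell-1}{2}\Big),\quad M_1(C(L_2)^\perp,C(L_1)^\perp)\ge\Big(\tfrac{\sigma-\ell+3}{2}\Big)\Big(\tfrac{\sigma+\ell+1}{2}\Big),$$ and if $\ell\le\sigma-1$ then $d(C(L_1))=s(s-\sigma)<M_1(C(L_1),C(L_2))$. (2) There exist $L_2\subsetneq L_1\subseteq\Delta(s,s)$ with $\#L_1-\#L_2=\ell$ and $$M_1(C(L_1),C(L_2))=\Big(\tfrac{\sigma-\ell+3}{2}\Big)\Big(\tfrac{\sigma+\ell+1}{2}\Big),\quad M_1(C(L_2)^\perp,C(L_1)^\perp)\ge\Big(s-\tfrac{\sigma-\ell+1}{2}\Big)\Big(s-\tfrac{\sigma+\ell-1}{2}\Big),$$ and if $\ell\le\sigma-1$ then $d(C(L_1))=\sigma+1<M_1(C(L_1),C(L_2))$.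
   Context: $q$ is a prime power. $S_1\times S_2=\{\alpha_1,\dots,\alpha_n\}$, $n=s^2$. $\Delta(s,s)=\{X^aY^b\mid 0\le a,b<s\}$. For $L\subseteq\Delta(s,s)$, $C(L)\subseteq\mathbb{F}_q^n$ is the span of $(N(\alpha_1),\dots,N(\alpha_n))$, $N\in L$; $C^\perp$ is the Euclidean dual; $d(C)$ is the minimum Hamming distance. $\prec_{\deg}$: $X^aY^b\prec_{\deg}X^cY^d$ iff $a+b<c+d$, or $a+b=c+d$ and $b<d$. For linear codes $C_2\subsetneq C_1$, $M_1(C_1,C_2)=\min\{w_H(\vec c)\mid \vec c\in C_1\setminus C_2\}$. *)

From HB Require Import structures.
From mathcomp Require Import all_boot all_order all_algebra all_field.
Set Implicit Arguments. Unset Strict Implicit. Unset Printing Implicit Defensive.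
Import GRing.Theory.
Local Open Scope ring_scope.

Definition npts (F : finFieldType) (S1 S2 : {set F}) : nat := #|setX S1 S2|.

Definition alpha (F : finFieldType) (S1 S2 : {set F}) (k : 'I_(npts S1 S2)) : F * F :=
  @enum_val _ (mem (setX S1 S2)) k.

Definition evmon (F : finFieldType) (S1 S2 : {set F}) (a b : nat) : 'rV[F]_(npts S1 S2) :=
  \row_k ((alpha k).1 ^+ a * (alpha k).2 ^+ b).

(* Delta(s,s) = {X^a Y^b | 0 <= a, b < s}, monomial X^a Y^b encoded as (a, b). *)
Definition monom (s : nat) := ('I_s * 'I_s)%type.

(* C(L): the span of the evaluation vectors of N in L, as a row space (square matrix). *)
Definition code (F : finFieldType) (S1 S2 : {set F}) (s : nat) (L : {set monom s})
  : 'M[F]_(npts S1 S2) :=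
  (\sum_(m in L) <<evmon S1 S2 m.1 m.2>>)%MS.

Definition dual_code (F : finFieldType) (n : nat) (C : 'M[F]_n) : 'M[F]_n := kermx C^T.

Definition wH (F : finFieldType) (n : nat) (v : 'rV[F]_n) : nat :=
  #|[set k : 'I_n | v 0 k != 0]|.

(* M_1(C1, C2) = min { w_H(c) | c in C1 \ C2 }  (value n if C1 \ C2 is empty,
   which never happens when C2 is strictly contained in C1). *)
Definition M1 (F : finFieldType) (n : nat) (C1 C2 : 'M[F]_n) : nat :=
  \big[minn/n]_(v : 'rV[F]_n | (v <= C1)%MS && ~~ (v <= C2)%MS) wH v.

Definition mindist (F : finFieldType) (n : nat) (C : 'M[F]_n) : nat :=
  \big[minn/n]_(v : 'rV[F]_n | (v <= C)%MS && (v != 0)) wH v.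

Definition deg_lt (a b c d : nat) : bool :=
  ((a + b < c + d)%N || ((a + b == c + d) && (b < d)%N)).
Definition deg_le (a b c d : nat) : bool :=
  ((a + b < c + d)%N || ((a + b == c + d) && (b <= d)%N)).

From HB Require Import structures.
From mathcomp Require Import all_boot all_order all_algebra all_field zify ring.
Set Implicit Arguments. Unset Strict Implicit. Unset Printing Implicit Defensive.
Import GRing.Theory.

(* Evaluation at the s^2 points of S1 x S2 maps the box monomials X^a Y^b (a, b < s) to a
   basis of F^n, and reduction modulo the vanishing polynomials of S1 and S2 rewrites any
   monomial in terms of box monomials that are not larger for the degree order. Hence every
   nonzero word has a leading box monomial X^a Y^b, and its weight is at least the footprint
   (s - a)(s - b), a bound attained by products of linear forms vanishing on an a-subset of S1
   and a b-subset of S2. A word of C(L1) \ C(L2) has a leading monomial X^a Y^b with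
   a + b = i + j and i <= b <= j, which gives M1(C(L1), C(L2)) = (s - i)(s - j). Dually, a
   word orthogonal to all monomials below X^a Y^b but not to X^a Y^b has weight at least
   (a + 1)(b + 1). Part (2) is part (1) for the mirrored pair (s - 1 - j, s - 1 - i). *)

Definition deg_rank (s a b : nat) : nat := (a + b) * s + b.

Lemma deg_le_rank s a b c d : b < s -> d < s ->
  deg_le a b c d = (deg_rank s a b <= deg_rank s c d).
Proof.
rewrite /deg_le /deg_rank => hb hd; apply/idP/idP.
- by case/orP => [|/andP[/eqP]] h; nia.
- move=> h; case: (ltnP (a + b) (c + d)) => h1; rewrite ?h1 //=.
  by apply/andP; split; [apply/eqP|]; nia.
Qed.

Lemma deg_lt_rank s a b c d : b < s -> d < s ->
  deg_lt a b c d = (deg_rank s a b < deg_rank s c d).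
Proof.
rewrite /deg_lt /deg_rank => hb hd; apply/idP/idP.
- by case/orP => [|/andP[/eqP]] h; nia.
- move=> h; case: (ltnP (a + b) (c + d)) => h1; rewrite ?h1 //=.
  by apply/andP; split; [apply/eqP|]; nia.
Qed.

Lemma deg_rank_inj s a b c d : b < s -> d < s ->
  deg_rank s a b = deg_rank s c d -> a = c /\ b = d.
Proof.
move=> hb hd e.
have h1 : ~~ deg_lt a b c d by rewrite (deg_lt_rank _ _ hb hd) e ltnn.
have h2 : ~~ deg_lt c d a b by rewrite (deg_lt_rank _ _ hd hb) e ltnn.
by move: h1 h2; rewrite /deg_lt; lia.
Qed.

Lemma deg_rank_pair_inj p q s : q <= s ->
  injective (fun x : 'I_p * 'I_q => deg_rank s x.1 x.2).
Proof.
move=> hq [x1 x2] [y1 y2] /= /deg_rank_inj[]; try exact: leq_trans (ltn_ord _) hq.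
by move=> e1 e2; congr (_, _); apply: val_inj.
Qed.

Lemma proper_deg_lt_le s I J : I <= J -> J < s ->
  [set N : monom s | deg_lt N.1 N.2 J I] \proper [set N : monom s | deg_le N.1 N.2 I J].
Proof.
move=> hIJ hJ; rewrite properE; apply/andP; split.
  by apply/subsetP => N; rewrite !inE /deg_le /deg_lt; lia.
by apply/subsetPn; exists (Ordinal (leq_ltn_trans hIJ hJ), Ordinal hJ);
  rewrite !inE /deg_le /deg_lt /=; lia.
Qed.

Lemma card_deg_le_diff s I J : I <= J -> J < s ->
  #|[set N : monom s | deg_le N.1 N.2 I J]| - #|[set N : monom s | deg_lt N.1 N.2 J I]|
  = (J - I).+1.
Proof.
move=> hIJ hJ; rewrite -(setIidPr (proper_sub (proper_deg_lt_le hIJ hJ))) -cardsD.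
have hA (k : 'I_(J - I).+1) : J - k < s by lia.
have hB (k : 'I_(J - I).+1) : I + k < s by have := ltn_ord k; lia.
pose g k : monom s := (Ordinal (hA k), Ordinal (hB k)).
suff -> : [set N : monom s | deg_le N.1 N.2 I J] :\: [set N : monom s | deg_lt N.1 N.2 J I]
          = g @: setT.
  rewrite card_imset ?cardsT ?card_ord // => k1 k2 /(congr1 (fun N => val N.2)) /= e.
  by apply: val_inj => /=; lia.
apply/setP => -[[x hx] [y hy]]; rewrite !inE /deg_le /deg_lt /=; apply/idP/imsetP.
- move=> h; have hk : y - I < (J - I).+1 by lia.
  by exists (Ordinal hk) => //; congr (_, _); apply: val_inj => /=; lia.
- by case=> k _ [-> ->] /=; have := ltn_ord k; lia.
Qed.

Lemma leq_bigmin (T : finType) (P : pred T) (w : T -> nat) x0 B :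
  B <= x0 -> (forall i, P i -> B <= w i) -> B <= \big[minn/x0]_(i | P i) w i.
Proof.
move=> h0 h; apply: (big_ind (fun x => B <= x)) => // x y hx hy.
by rewrite leq_min hx hy.
Qed.

Lemma bigmin_leq (T : finType) (P : pred T) (w : T -> nat) x0 i0 :
  P i0 -> \big[minn/x0]_(i | P i) w i <= w i0.
Proof.
move=> Pi0; rewrite -big_filter.
have : i0 \in [seq i <- index_enum T | P i] by rewrite mem_filter Pi0 mem_index_enum.
elim: [seq _ <- _ | _] => // y r IH; rewrite in_cons big_cons => /orP[/eqP<-|/IH h].
  exact: geq_minl.
by rewrite geq_min h orbT.
Qed.

Lemma exists_subset_card (T : finType) (S : {set T}) k :
  k <= #|S| -> exists2 A : {set T}, A \subset S & #|A| = k.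
Proof.
move=> hk; exists [set x in take k (enum S)].
  by apply/subsetP => x; rewrite inE => /mem_take; rewrite mem_enum.
have u := take_uniq k (enum_uniq (mem S)).
by rewrite cardsE; move/card_uniqP: u ->; rewrite size_takel // -cardE.
Qed.

Lemma even_halves sigma l : 0 < l -> l <= sigma + 1 -> ~~ odd l = odd sigma ->
  exists i j, sigma + 1 - l = i.*2 /\ sigma + l - 1 = j.*2.
Proof.
move=> hl0 hl hpar.
have ev1 : ~~ odd (sigma + 1 - l).
  by have := oddD (sigma + 1 - l) l; rewrite subnK // addn1 /= -hpar; case: odd; case: odd.
have ev2 : ~~ odd (sigma + l - 1).
  by rewrite (_ : sigma + l - 1 = (sigma + 1 - l) + (l - 1).*2) ?oddD ?odd_double ?addbF //; lia.
by exists (sigma + 1 - l)./2, (sigma + l - 1)./2; rewrite !halfK (negbTE ev1) (negbTE ev2) !subn0.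
Qed.

Lemma ltn_mul_sub_sum s i j : 0 < i -> 0 < j -> i + j <= s ->
  s * (s - (i + j)) < (s - i) * (s - j).
Proof.
move=> hi hj hs; have [t ->] : exists t, s = i + j + t by exists (s - (i + j)); lia.
have -> : i + j + t - (i + j) = t by lia.
have -> : i + j + t - i = j + t by lia.
have -> : i + j + t - j = i + t by lia.
by nia.
Qed.

Lemma ltn_sum_mulSS i j : 0 < i -> 0 < j -> (i + j).+1 < i.+1 * j.+1.
Proof. by move=> hi hj; nia. Qed.

Local Open Scope ring_scope.

Definition vanish (F : finFieldType) (A : {set F}) : {poly F} :=
  \prod_(t <- enum A) ('X - t%:P).

Section Vanish.
Variables (F : finFieldType) (A : {set F}).

Lemma size_vanish : size (vanish A) = #|A|.+1.
Proof. by rewrite size_prod_XsubC -cardE. Qed.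

Lemma vanish_monic : vanish A \is monic.
Proof. exact: monic_prod_XsubC. Qed.

Lemma coef_vanish_card : (vanish A)`_#|A| = 1.
Proof. by rewrite -(monicP vanish_monic) lead_coefE size_vanish. Qed.

Lemma horner_vanish_neq0 x : ((vanish A).[x] != 0) = (x \notin A).
Proof. by rewrite -/(root _ x) root_prod_XsubC mem_enum. Qed.

Lemma expr_vanish m x : #|A| = m -> x \in A ->
  x ^+ m = \sum_(k < m) - (vanish A)`_k * x ^+ k.
Proof.
move=> hA xA; have /rootP : root (vanish A) x by rewrite root_prod_XsubC mem_enum.
rewrite horner_coef size_vanish big_ord_recr /= coef_vanish_card mul1r addrC hA.
move/eqP; rewrite addr_eq0 => /eqP ->.
by rewrite -sumrN; apply: eq_bigr => k _; rewrite mulNr.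
Qed.

End Vanish.

Section Vectors.
Variables (F : finFieldType) (n : nat).

Definition dotr (u w : 'rV[F]_n) : F := \sum_k u 0 k * w 0 k.

Lemma sub_kermx_tr (u w : 'rV[F]_n) : (u <= kermx w^T)%MS = (dotr u w == 0).
Proof.
have uwT : u *m w^T = (dotr u w)%:M.
  by apply/matrixP => i j; rewrite !ord1 !mxE eqxx mulr1n; apply: eq_bigr => k _; rewrite !mxE.
apply/sub_kermxP/eqP; rewrite uwT; last by move->; rewrite raddf0.
by move/matrixP/(_ 0 0); rewrite !mxE eqxx !mulr1n.
Qed.

Lemma mxrank_sumsmx_gen_le (I : finType) (P : pred I) (A : I -> 'rV[F]_n) :
  (\rank (\sum_(i | P i) <<A i>>)%MS <= #|P|)%N.
Proof.
rewrite -sum1_card.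
apply: (big_ind2 (fun (x : 'M[F]_n) (y : nat) => \rank x <= y)%N).
- by rewrite mxrank0.
- by move=> x1 y1 x2 y2 h1 h2; apply: leq_trans (mxrank_adds_leqif _ _).1 (leq_add h1 h2).
- by move=> i _; rewrite genmxE; exact: rank_leq_row.
Qed.

Lemma mxrank_le_wH (I : finType) (P : pred I) (r : I -> 'rV[F]_n) (f : 'rV[F]_n) :
  (forall i k, P i -> f 0 k = 0 -> r i 0 k = 0) ->
  (\rank (\sum_(i | P i) <<r i>>)%MS <= wH f)%N.
Proof.
move=> h.
pose D := (\sum_(k | f 0 k != 0) <<delta_mx 0 k : 'rV[F]_n>>)%MS.
apply: (@leq_trans (\rank D)); last first.
  by apply: leq_trans (mxrank_sumsmx_gen_le _ _) _; rewrite /wH cardsE.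
apply: mxrankS; apply/sumsmx_subP => i Pi; rewrite genmxE.
rewrite (row_sum_delta (r i)); apply: summx_sub => k _.
case: (eqVneq (f 0 k) 0) => hk; first by rewrite h ?scale0r ?sub0mx.
by apply: scalemx_sub; apply: (sumsmx_sup k) => //; rewrite genmxE.
Qed.

Lemma card_le_mxrank_chain (I : finType) (ord : I -> nat) (g : I -> 'rV[F]_n) (T : {set I}) :
  {in T &, injective ord} ->
  (forall i, i \in T -> ~~ (g i <= \sum_(j in T | (ord j < ord i)%N) <<g j>>)%MS) ->
  (#|T| <= \rank (\sum_(i in T) <<g i>>)%MS)%N.
Proof.
elim: {T}_.+1 {-2}T (ltnSn #|T|) => // k IH T hk inj hT.
case: (set_0Vmem T) => [->|[i0 Ti0]]; first by rewrite cards0.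
pose i := [arg max_(i > i0 in T) ord i].
have [Ti imax] : i \in T /\ forall j, j \in T -> (ord j <= ord i)%N.
  by rewrite /i; case: arg_maxnP.
have below j : j \in T :\ i -> (ord j < ord i)%N.
  rewrite !inE => /andP[jni jT]; rewrite ltn_neqAle imax // andbT.
  by apply: contra jni => /eqP e; apply/eqP; apply: inj.
set S' := (\sum_(j in T :\ i) <<g j>>)%MS.
have IH' : (#|T :\ i| <= \rank S')%N.
  apply: IH.
  - by move: hk; rewrite (cardsD1 i T) Ti add1n ltnS.
  - by move=> x y /setD1P[_ ?] /setD1P[_ ?]; exact: inj.
  - move=> j jT'; have /setD1P[_ jT] := jT'.
    rewrite (eq_bigl (fun x => (x \in T) && (ord x < ord j)%N)); first exact: hT.
    move=> x; rewrite !inE; case: (eqVneq x i) => [->|] //=.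
    by rewrite Ti /= ltnNge ltnW // below.
rewrite (cardsD1 i T) Ti add1n (bigD1 i) //=.
have -> : (\sum_(j in T | j != i) <<g j>>)%MS = S' by apply: eq_bigl => x; rewrite !inE andbC.
apply: leq_ltn_trans IH' _; apply: rank_ltmx; rewrite ltmxE addsmxSr /=.
apply: contra (hT i Ti) => h.
have giS : (g i <= S')%MS.
  by apply: submx_trans h; apply: submx_trans (addsmxSl _ _); rewrite genmxE.
apply: submx_trans giS _; apply/sumsmx_subP => j jT'; apply: (sumsmx_sup j) => //.
by rewrite (below j jT') andbT; case/setD1P: jT'.
Qed.

Lemma card_le_wH_chain (I : finType) (ord : I -> nat) (g : I -> 'rV[F]_n) (f : 'rV[F]_n) :
  injective ord ->
  (forall i, ~~ (g i <= \sum_(j | (ord j < ord i)%N) <<g j>>)%MS) ->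
  (forall i k, f 0 k = 0 -> g i 0 k = 0) -> (#|I| <= wH f)%N.
Proof.
move=> inj hg hf; rewrite -cardsT.
apply: leq_trans (card_le_mxrank_chain (g := g) (T := setT) (in2W inj) _) _.
  by move=> i _; rewrite (eq_bigl (fun j => ord j < ord i)%N) // => j; rewrite in_setT.
by apply: mxrank_le_wH => i k _; exact: hf.
Qed.

End Vectors.

Section Grid.
Variables (F : finFieldType) (S1 S2 : {set F}) (s : nat).
Hypotheses (hS1 : #|S1| = s) (hS2 : #|S2| = s).

Local Notation n := (npts S1 S2).
Local Notation ev := (evmon S1 S2).
Local Notation al := (@alpha F S1 S2).

Lemma npts_sq : n = (s * s)%N.
Proof. by rewrite /npts cardsX hS1 hS2. Qed.

Lemma alpha_in (k : 'I_n) : ((al k).1 \in S1) && ((al k).2 \in S2).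
Proof. by have := enum_valP k; rewrite /alpha inE. Qed.

Lemma card_alpha_in (Z : {set F * F}) : Z \subset setX S1 S2 ->
  #|[set k : 'I_n | al k \in Z]| = #|Z|.
Proof.
move=> hZ; have e : al @: [set k : 'I_n | al k \in Z] = Z.
  apply/setP => z; apply/imsetP/idP => [[k]|zZ]; first by rewrite inE => hk ->.
  have zX : z \in setX S1 S2 by apply: (subsetP hZ).
  by exists (enum_rank_in zX z); rewrite ?inE /alpha enum_rankK_in.
by rewrite -{2}e card_imset //; exact: enum_val_inj.
Qed.

Definition mspan (P : nat -> nat -> bool) : 'M[F]_n :=
  (\sum_(m : monom s | P m.1 m.2) <<ev m.1 m.2>>)%MS.

Definition span_le c d := mspan (fun a b => deg_le a b c d).
Definition span_lt c d := mspan (fun a b => deg_lt a b c d).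

Lemma code_deg_le c d : code S1 S2 [set N : monom s | deg_le N.1 N.2 c d] = span_le c d.
Proof. by apply: eq_bigl => m; rewrite inE. Qed.

Lemma code_deg_lt c d : code S1 S2 [set N : monom s | deg_lt N.1 N.2 c d] = span_lt c d.
Proof. by apply: eq_bigl => m; rewrite inE. Qed.

Lemma ev_sub_mspan (P : nat -> nat -> bool) a b : (a < s)%N -> (b < s)%N -> P a b ->
  (ev a b <= mspan P)%MS.
Proof. by move=> ha hb hP; apply: (sumsmx_sup (Ordinal ha, Ordinal hb)); rewrite ?genmxE. Qed.

Lemma mspan_subP (P : nat -> nat -> bool) (X : 'M[F]_n) :
  (forall a b, (a < s)%N -> (b < s)%N -> P a b -> (ev a b <= X)%MS) -> (mspan P <= X)%MS.
Proof. by move=> h; apply/sumsmx_subP => m Pm; rewrite genmxE; exact: h. Qed.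

Lemma mspanS (P Q : nat -> nat -> bool) :
  (forall a b, (a < s)%N -> (b < s)%N -> P a b -> Q a b) -> (mspan P <= mspan Q)%MS.
Proof. by move=> h; apply: mspan_subP => a b ha hb hP; apply: ev_sub_mspan (h a b ha hb hP). Qed.

Lemma dotr_mspan_eq0 (P : nat -> nat -> bool) w u :
  (forall a b, (a < s)%N -> (b < s)%N -> P a b -> dotr (ev a b) w = 0) ->
  (u <= mspan P)%MS -> dotr u w = 0.
Proof.
move=> h hu; apply/eqP; rewrite -sub_kermx_tr; apply: submx_trans hu _.
by apply: mspan_subP => a b ha hb hP; rewrite sub_kermx_tr h.
Qed.

Lemma sub_dual_mspanP (P : nat -> nat -> bool) v : (v <= dual_code (mspan P))%MS <->
  (forall a b, (a < s)%N -> (b < s)%N -> P a b -> dotr (ev a b) v = 0).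
Proof.
have kerT (X : 'M[F]_n) : (v <= kermx X^T)%MS = (X <= kermx v^T)%MS.
  by apply/sub_kermxP/sub_kermxP => h; rewrite -[X in X *m _]trmxK -trmx_mul h trmx0.
rewrite /dual_code kerT; split => [h a b ha hb hP|h].
  by apply/eqP; rewrite -sub_kermx_tr; apply: submx_trans h; apply: ev_sub_mspan.
by apply: mspan_subP => a b ha hb hP; rewrite sub_kermx_tr h.
Qed.

Lemma ev_reduceX c d : (s <= c)%N ->
  ev c d = \sum_(k < s) (- (vanish S1)`_k) *: ev (c - s + k) d.
Proof.
move=> hc; apply/rowP => k; rewrite !mxE summxE; have /andP[x1 _] := alpha_in k.
rewrite -{1}(subnK hc) exprD (expr_vanish hS1 x1) mulr_sumr mulr_suml.
by apply: eq_bigr => j _; rewrite !mxE exprD; ring.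
Qed.

Lemma ev_reduceY c d : (s <= d)%N ->
  ev c d = \sum_(k < s) (- (vanish S2)`_k) *: ev c (d - s + k).
Proof.
move=> hd; apply/rowP => k; rewrite !mxE summxE; have /andP[_ x2] := alpha_in k.
rewrite -{1}(subnK hd) exprD (expr_vanish hS2 x2) !mulr_sumr.
by apply: eq_bigr => j _; rewrite !mxE exprD; ring.
Qed.

Lemma ev_sub_span_le c d : (ev c d <= span_le c d)%MS.
Proof.
move: (ltnSn (c + d)); move: {2}(c + d).+1 => t; elim: t c d => [|t IH] c d hcd //.
case: (leqP s c) => hc; [|case: (leqP s d) => hd].
- rewrite ev_reduceX //; apply: summx_sub => k _; apply: scalemx_sub.
  apply: submx_trans (IH _ _ _) _; first by have := ltn_ord k; lia.
  by apply: mspanS => a b _ _; rewrite /deg_le; have := ltn_ord k; lia.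
- rewrite ev_reduceY //; apply: summx_sub => k _; apply: scalemx_sub.
  apply: submx_trans (IH _ _ _) _; first by have := ltn_ord k; lia.
  by apply: mspanS => a b _ _; rewrite /deg_le; have := ltn_ord k; lia.
- by apply: ev_sub_mspan; rewrite /deg_le; lia.
Qed.

Definition evp (p q : {poly F}) : 'rV[F]_n := \row_k (p.[(al k).1] * q.[(al k).2]).

Lemma evp_expand (p q : {poly F}) :
  evp p q = \sum_(a < size p) \sum_(b < size q) (p`_a * q`_b) *: ev a b.
Proof.
apply/rowP => k; rewrite !mxE !horner_coef summxE mulr_suml; apply: eq_bigr => a _.
by rewrite summxE mulr_sumr; apply: eq_bigr => b _; rewrite !mxE; ring.
Qed.

Lemma evp_sub_mspan (p q : {poly F}) (P : nat -> nat -> bool) :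
  (size p <= s)%N -> (size q <= s)%N ->
  (forall a b, (a < size p)%N -> (b < size q)%N -> P a b) -> (evp p q <= mspan P)%MS.
Proof.
move=> sp sq h; rewrite evp_expand; apply: summx_sub => a _; apply: summx_sub => b _.
apply: scalemx_sub; apply: ev_sub_mspan; first exact: leq_trans (ltn_ord a) sp.
  exact: leq_trans (ltn_ord b) sq.
exact: h.
Qed.

(* The unit vector at alpha_k is, up to a scalar, the evaluation of the product of the
   vanishing polynomials of S1 \ {x} and S2 \ {y}, where alpha_k = (x, y). *)
Lemma mspan_full : (1%:M <= mspan (fun _ _ => true))%MS.
Proof.
apply/row_subP => k; rewrite row1.
set x := (al k).1; set y := (al k).2; have /andP[xS yS] := alpha_in k.
pose p := vanish (S1 :\ x); pose q := vanish (S2 :\ y).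
have nz : p.[x] * q.[y] != 0 by rewrite mulf_neq0 // horner_vanish_neq0 !inE eqxx.
have hev : evp p q = (p.[x] * q.[y]) *: delta_mx 0 k.
  apply/rowP => k'; rewrite !mxE eqxx /=.
  case: (eqVneq k' k) => [->|ne]; first by rewrite mulr1.
  rewrite mulr0; apply/eqP; rewrite mulf_eq0.
  have /andP[x'S y'S] := alpha_in k'.
  have : ((al k').1 != x) || ((al k').2 != y).
    have : al k' != al k by apply: contra ne => /eqP /enum_val_inj ->.
    by rewrite /x /y; case: (al k') => ? ?; case: (al k) => ? ?; rewrite xpair_eqE negb_and.
  case/orP => h; apply/orP; [left|right];
    by apply/negPn; rewrite horner_vanish_neq0 negbK !inE h.
have -> : delta_mx 0 k = (p.[x] * q.[y])^-1 *: evp p q by rewrite hev scalerA mulVf // scale1r.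
apply: scalemx_sub; apply: evp_sub_mspan => //; rewrite size_vanish.
- by move: hS1; rewrite (cardsD1 x S1) xS => <-.
- by move: hS2; rewrite (cardsD1 y S2) yS => <-.
Qed.

(* The s^2 box monomials span the n = s^2 dimensional space, so none is redundant. *)
Lemma ev_free a b : (a < s)%N -> (b < s)%N ->
  ~~ (ev a b <= mspan (fun a' b' => (a' != a) || (b' != b)))%MS.
Proof.
move=> ha hb; apply/negP => h.
have : (1%:M <= mspan (fun a' b' => (a' != a) || (b' != b)))%MS.
  apply: submx_trans mspan_full _; apply: mspan_subP => a' b' ha' hb' _.
  case: (boolP ((a' != a) || (b' != b))) => hab; first exact: ev_sub_mspan.
  by move: hab; rewrite negb_or !negbK => /andP[/eqP-> /eqP->].
move/mxrankS; rewrite mxrank1; apply/negP; rewrite -ltnNge.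
pose m0 : monom s := (Ordinal ha, Ordinal hb).
apply: leq_ltn_trans (mxrank_sumsmx_gen_le _ _) _.
rewrite (@eq_card _ _ (predC1 m0)); last first.
  by case=> [[x hx] [y hy]]; rewrite !inE /= xpair_eqE negb_and.
rewrite cardC1 card_prod !card_ord npts_sq.
have s0 : (0 < s)%N by lia.
by rewrite ltn_predL muln_gt0 s0.
Qed.

Lemma ev_notin_span_lt a b : (a < s)%N -> (b < s)%N -> ~~ (ev a b <= span_lt a b)%MS.
Proof.
move=> ha hb; apply: contra (ev_free ha hb) => h; apply: submx_trans h _.
by apply: mspanS => a' b' _ _; rewrite /deg_lt; lia.
Qed.

(* With W t the span of the box monomials of rank < t, the least t such that f lies in W t is
   the successor of the rank of the leading monomial of f. *)
Lemma exists_lead (f : 'rV[F]_n) : f != 0 -> exists a b,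
  [/\ (a < s)%N, (b < s)%N, (f <= span_le a b)%MS & ~~ (f <= span_lt a b)%MS].
Proof.
move=> fnz; pose W t := mspan (fun a b => (deg_rank s a b < t)%N).
have [t ft tmin] : exists2 t, (f <= W t)%MS & forall t', (f <= W t')%MS -> (t <= t')%N.
  have ex : exists t, (f <= W t)%MS.
    exists (s * s * 2)%N; apply: submx_trans (submx1 f) _; apply: submx_trans mspan_full _.
    by apply: mspanS => a b ha hb _; rewrite /deg_rank; nia.
  by case: (ex_minnP ex) => t; exists t.
case: t ft tmin => [|t] ft tmin.
  by case/negP: fnz; rewrite -submx0; apply: submx_trans ft _; apply/sumsmx_subP.
have ftn : ~~ (f <= W t)%MS by apply/negP => /tmin; rewrite ltnn.
case: (boolP [exists m : monom s, deg_rank s m.1 m.2 == t]) => [/existsP[m /eqP hm]|].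
  exists m.1, m.2; split => //.
  - apply: submx_trans ft _; apply: mspanS => a b ha hb.
    by rewrite (deg_le_rank _ _ hb (ltn_ord m.2)) hm ltnS.
  - apply: contra ftn => h; apply: submx_trans h _; apply: mspanS => a b ha hb.
    by rewrite (deg_lt_rank _ _ hb (ltn_ord m.2)) hm.
move/existsPn => hno; case/negP: ftn; apply: submx_trans ft _.
apply: mspanS => a b ha hb; rewrite ltnS leq_eqVlt; case: eqP => // e.
by have := hno (Ordinal ha, Ordinal hb); rewrite /= e eqxx.
Qed.

Lemma deg_le_of_span (f : 'rV[F]_n) a b c d :
  (f <= span_le c d)%MS -> ~~ (f <= span_lt a b)%MS -> deg_le a b c d.
Proof.
move=> hle; apply: contraR => h; apply: submx_trans hle _.
by apply: mspanS => a' b' _ _; move: h; rewrite /deg_le /deg_lt; lia.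
Qed.

Lemma span_le_decomp (f : 'rV[F]_n) a b : (f <= span_le a b)%MS ->
  exists c w, (w <= span_lt a b)%MS /\ f = c *: ev a b + w.
Proof.
move=> hle; have : (f <= ev a b + span_lt a b)%MS.
  apply: submx_trans hle _; apply: mspan_subP => a' b' ha' hb'.
  case: (boolP (deg_lt a' b' a b)) => h1 h2.
    by apply: submx_trans (addsmxSr _ _); apply: ev_sub_mspan.
  have [-> ->] : a' = a /\ b' = b by move: h1 h2; rewrite /deg_le /deg_lt; lia.
  exact: addsmxSl.
case/sub_addsmxP => [[u w]] /= ->; exists (u 0 0), (w *m span_lt a b).
by split; [exact: submxMl | rewrite {1}[u]mx11_scalar mul_scalar_mx].
Qed.

Lemma ev_mul a b u v : ev a b *m diag_mx (ev u v) = ev (a + u) (b + v).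
Proof. by rewrite mul_mx_diag; apply/rowP => k; rewrite !mxE !exprD; ring. Qed.

Lemma mspan_mul_sub (P : nat -> nat -> bool) u v (X : 'M[F]_n) :
  (forall a b, (a < s)%N -> (b < s)%N -> P a b -> (ev (a + u) (b + v) <= X)%MS) ->
  (mspan P *m diag_mx (ev u v) <= X)%MS.
Proof.
move=> h; rewrite /mspan sumsmxMr; apply/sumsmx_subP => m Pm.
by rewrite (eqmxMr _ (genmxE _)) ev_mul; exact: h.
Qed.

Lemma span_le_shift c d u v : (span_le c d *m diag_mx (ev u v) <= span_le (c + u) (d + v))%MS.
Proof.
apply: mspan_mul_sub => a b _ _ h; apply: submx_trans (ev_sub_span_le _ _) _.
by apply: mspanS => a' b' _ _; move: h; rewrite /deg_le; lia.
Qed.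

Lemma span_lt_shift c d u v : (span_lt c d *m diag_mx (ev u v) <= span_lt (c + u) (d + v))%MS.
Proof.
apply: mspan_mul_sub => a b _ _ h; apply: submx_trans (ev_sub_span_le _ _) _.
by apply: mspanS => a' b' _ _; move: h; rewrite /deg_le /deg_lt; lia.
Qed.

Lemma lead_shift (f : 'rV[F]_n) a b u v : (a + u < s)%N -> (b + v < s)%N ->
  (f <= span_le a b)%MS -> ~~ (f <= span_lt a b)%MS ->
  ~~ (f *m diag_mx (ev u v) <= span_lt (a + u) (b + v))%MS.
Proof.
move=> hau hbv hle hlt; have [c [w [hw fE]]] := span_le_decomp hle.
have cnz : c != 0 by apply: contra hlt => /eqP c0; rewrite fE c0 scale0r add0r.
have wD := submx_trans (submxMr (diag_mx (ev u v)) hw) (span_lt_shift a b u v).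
rewrite fE mulmxDl -scalemxAl ev_mul; apply: contra (ev_notin_span_lt hau hbv) => h.
have : (c *: ev (a + u) (b + v) <= span_lt (a + u) (b + v))%MS.
  by rewrite -(addrK (w *m diag_mx (ev u v)) (c *: _)) addmx_sub // -scaleN1r scalemx_sub.
by move/(scalemx_sub c^-1); rewrite scalerA mulVf // scale1r.
Qed.

(* The shifts of f by the monomials X^u Y^v with a + u, b + v < s have pairwise distinct
   leading monomials, hence are independent, and all are supported on the support of f. *)
Lemma footprint_bound (f : 'rV[F]_n) a b : (a < s)%N -> (b < s)%N ->
  (f <= span_le a b)%MS -> ~~ (f <= span_lt a b)%MS -> ((s - a) * (s - b) <= wH f)%N.
Proof.
move=> ha hb hle hlt.
pose g (x : 'I_(s - a) * 'I_(s - b)) := f *m diag_mx (ev x.1 x.2).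
have bx (x : 'I_(s - a) * 'I_(s - b)) : [/\ (a + x.1 < s)%N, (b + x.2 < s)%N & (x.2 < s)%N].
  by have := ltn_ord x.1; have := ltn_ord x.2; split; lia.
have := card_le_wH_chain (ord := fun x : 'I_(s - a) * 'I_(s - b) => deg_rank s x.1 x.2) (g := g).
rewrite card_prod !card_ord; apply.
- by apply: deg_rank_pair_inj; exact: leq_subr.
- move=> x; have [hax hbx hx2] := bx x.
  apply: contra (lead_shift hax hbx hle hlt) => /submx_trans; apply.
  apply/sumsmx_subP => y hy; rewrite genmxE.
  apply: submx_trans (submxMr _ hle) (submx_trans (span_le_shift _ _ _ _) _).
  have [_ _ hy2] := bx y; move: hy; rewrite -(deg_lt_rank _ _ hy2 hx2) => hy.
  by apply: mspanS => a' b' _ _; move: hy; rewrite /deg_le /deg_lt; lia.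
- by move=> x k hk; rewrite /g mul_mx_diag mxE hk mul0r.
Qed.

Lemma dotr_shift (v : 'rV[F]_n) a b c d :
  dotr (v *m diag_mx (ev a b)) (ev c d) = dotr (ev (a + c) (b + d)) v.
Proof. by apply: eq_bigr => k _; rewrite mul_mx_diag !mxE !exprD; ring. Qed.

(* The monomial X^(a-u) Y^(b-v) separates the shift of v by X^u Y^v from its shifts by all
   smaller monomials. *)
Lemma dual_footprint_bound (v : 'rV[F]_n) a b :
  (forall a' b', deg_lt a' b' a b -> dotr (ev a' b') v = 0) -> dotr (ev a b) v != 0 ->
  (a.+1 * b.+1 <= wH v)%N.
Proof.
move=> h0 hN; pose r (x : 'I_a.+1 * 'I_b.+1) := v *m diag_mx (ev x.1 x.2).
have := card_le_wH_chain (ord := fun x : 'I_a.+1 * 'I_b.+1 => deg_rank b.+1 x.1 x.2) (g := r).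
rewrite card_prod !card_ord; apply; first exact: deg_rank_pair_inj.
- move=> [x1 x2]; have hx1 := ltn_ord x1; have hx2 := ltn_ord x2.
  have : ~~ (r (x1, x2) <= kermx (ev (a - x1) (b - x2))^T)%MS.
    by rewrite sub_kermx_tr /r dotr_shift !subnKC // -ltnS.
  apply: contra => /submx_trans; apply; apply/sumsmx_subP => -[y1 y2] hy.
  rewrite genmxE sub_kermx_tr /r dotr_shift h0 //.
  by move: hy; rewrite -deg_lt_rank ?ltn_ord // /deg_lt /=; lia.
- by move=> x k hk; rewrite /r mul_mx_diag mxE hk mul0r.
Qed.

Lemma footprint_sharp a b : (a < s)%N -> (b < s)%N -> exists f : 'rV[F]_n,
  [/\ (f <= mspan (fun a' b' => (a' <= a) && (b' <= b))%N)%MS,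
      ~~ (f <= span_lt a b)%MS & wH f = ((s - a) * (s - b))%N].
Proof.
move=> ha hb.
have [A AS hA] : exists2 A : {set F}, A \subset S1 & #|A| = a by apply: exists_subset_card; lia.
have [B BS hB] : exists2 B : {set F}, B \subset S2 & #|B| = b by apply: exists_subset_card; lia.
pose p := vanish A; pose q := vanish B.
have sp : size p = a.+1 by rewrite size_vanish hA.
have sq : size q = b.+1 by rewrite size_vanish hB.
have pa : p`_a = 1 by rewrite -hA coef_vanish_card.
have qb : q`_b = 1 by rewrite -hB coef_vanish_card.
exists (evp p q); split.
- by apply: evp_sub_mspan; rewrite ?sp ?sq // => a' b'; rewrite !ltnS => -> ->.
- apply: contra (ev_notin_span_lt ha hb) => h.
  have lower : (evp p q - ev a b <= span_lt a b)%MS.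
    rewrite evp_expand sp sq big_ord_recr /= [X in _ + X - _]big_ord_recr /= pa qb mulr1 scale1r.
    rewrite addrA addrK; apply: addmx_sub; apply: summx_sub => i _.
      apply: summx_sub => j _; apply: scalemx_sub; apply: ev_sub_mspan; rewrite /deg_lt;
        by have := ltn_ord i; have := ltn_ord j; lia.
    by apply: scalemx_sub; apply: ev_sub_mspan; rewrite /deg_lt; have := ltn_ord i; lia.
  by rewrite -[ev a b](subKr (evp p q)) addmx_sub // eqmx_opp.
- have -> : ((s - a) * (s - b))%N = (#|S1 :\: A| * #|S2 :\: B|)%N.
    by rewrite !cardsD (setIidPr AS) (setIidPr BS) hS1 hS2 hA hB.
  rewrite /wH (_ : [set k | _] = [set k : 'I_n | al k \in setX (S1 :\: A) (S2 :\: B)]).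
    rewrite card_alpha_in ?cardsX //; apply/subsetP => z; rewrite !inE.
    by case/andP => /andP[_ ->] /andP[_ ->].
  apply/setP => k; rewrite !inE mxE mulf_eq0 negb_or !horner_vanish_neq0.
  by have /andP[-> ->] := alpha_in k; rewrite !andbT.
Qed.

Lemma wH_span_le (v : 'rV[F]_n) c d : (v <= span_le c d)%MS -> v != 0 ->
  exists a b, [/\ (a < s)%N, (b < s)%N, (a + b <= c + d)%N & ((s - a) * (s - b) <= wH v)%N].
Proof.
move=> hv vnz; have [a [b [ha hb hle hlt]]] := exists_lead vnz.
exists a, b; split => //; last exact: footprint_bound.
by move: (deg_le_of_span hv hlt); rewrite /deg_le; lia.
Qed.

Lemma mindist_deg_le_small I J : (I + J < s)%N ->
  mindist (code S1 S2 [set N : monom s | deg_le N.1 N.2 I J]) = (s * (s - (I + J)))%N.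
Proof.
move=> hs; rewrite code_deg_le /mindist; apply/eqP; rewrite eqn_leq; apply/andP; split.
  have [f [hf hfl hw]] := footprint_sharp hs (leq_ltn_trans (leq0n _) hs).
  rewrite (_ : s * _ = wH f)%N; last by rewrite hw subn0 mulnC.
  apply: bigmin_leq; apply/andP; split.
    by apply: submx_trans hf _; apply: mspanS => a b _ _; rewrite /deg_le; lia.
  by apply: contraNneq hfl => ->; rewrite sub0mx.
apply: leq_bigmin => [|v /andP[hv vnz]]; first by rewrite npts_sq leq_mul ?leq_subr.
by have [a [b [ha hb hab hw]]] := wH_span_le hv vnz; apply: leq_trans hw; nia.
Qed.

Lemma mindist_deg_le_large I J : (I < s)%N -> (J < s)%N -> (s <= (I + J).+1)%N ->
  mindist (code S1 S2 [set N : monom s | deg_le N.1 N.2 I J]) = ((s.*2).-1 - (I + J))%N.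
Proof.
move=> hI hJ hs; rewrite code_deg_le /mindist; apply/eqP; rewrite eqn_leq; apply/andP; split.
  have ha : (s.-1 < s)%N by lia.
  have hb : (I + J - s.-1 < s)%N by lia.
  have [f [hf hfl hw]] := footprint_sharp ha hb.
  rewrite (_ : _ - _ = wH f)%N; last by rewrite hw (_ : s - s.-1 = 1)%N ?mul1n; lia.
  apply: bigmin_leq; apply/andP; split.
    by apply: submx_trans hf _; apply: mspanS => a b _ _; rewrite /deg_le; lia.
  by apply: contraNneq hfl => ->; rewrite sub0mx.
apply: leq_bigmin => [|v /andP[hv vnz]]; first by rewrite npts_sq; nia.
by have [a [b [ha hb hab hw]]] := wH_span_le hv vnz; apply: leq_trans hw; nia.
Qed.

Lemma M1_deg_interval I J : (I <= J)%N -> (J < s)%N ->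
  M1 (code S1 S2 [set N : monom s | deg_le N.1 N.2 I J])
     (code S1 S2 [set N : monom s | deg_lt N.1 N.2 J I]) = ((s - I) * (s - J))%N.
Proof.
move=> hIJ hJ; rewrite code_deg_le code_deg_lt /M1.
apply/eqP; rewrite eqn_leq; apply/andP; split.
  have [f [hf hfl <-]] := footprint_sharp (leq_ltn_trans hIJ hJ) hJ.
  apply: bigmin_leq; apply/andP; split.
    by apply: submx_trans hf _; apply: mspanS => a b _ _; rewrite /deg_le; lia.
  apply: contra hfl => h; apply: submx_trans h _.
  by apply: mspanS => a b _ _; rewrite /deg_lt; lia.
apply: leq_bigmin => [|v /andP[h1 h2]]; first by rewrite npts_sq leq_mul ?leq_subr.
have vnz : v != 0 by apply: contraNneq h2 => ->; rewrite sub0mx.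
have [a [b [ha hb hle hlt]]] := exists_lead vnz.
have : (a + b = I + J /\ I <= b <= J)%N.
  by move: (deg_le_of_span h1 hlt) (deg_le_of_span hle h2); rewrite /deg_le; lia.
by case=> hab /andP[hIb hbJ]; apply: leq_trans (footprint_bound ha hb hle hlt); nia.
Qed.

Lemma M1_dual_deg_interval I J : (I <= J)%N -> (J < s)%N ->
  (I.+1 * J.+1 <= M1 (dual_code (code S1 S2 [set N : monom s | deg_lt N.1 N.2 J I]))
                     (dual_code (code S1 S2 [set N : monom s | deg_le N.1 N.2 I J])))%N.
Proof.
move=> hIJ hJ; rewrite code_deg_le code_deg_lt /M1.
apply: leq_bigmin => [|v /andP[/sub_dual_mspanP h2 h1]].
  by rewrite npts_sq leq_mul //; lia.
have [m0 Pm0] : exists m0 : monom s, deg_le m0.1 m0.2 I J && (dotr (ev m0.1 m0.2) v != 0).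
  apply/existsP; apply: contraR h1 => /existsPn hn; apply/sub_dual_mspanP => a b ha hb hab.
  by have := hn (Ordinal ha, Ordinal hb); rewrite /= hab negbK => /eqP.
case: (@arg_minnP _ m0 (fun m : monom s => deg_le m.1 m.2 I J && (dotr (ev m.1 m.2) v != 0))
                  (fun m => deg_rank s m.1 m.2) Pm0) => -[m1 m2] /= /andP[hm hd] hmin.
have hmJI : ~~ deg_lt m1 m2 J I by apply: contra hd => hlt; apply/eqP; apply: h2.
apply: leq_trans (dual_footprint_bound _ hd).
  have : (m1 + m2 = I + J /\ I <= m2 <= J)%N by move: hm hmJI; rewrite /deg_le /deg_lt; lia.
  by case=> hs /andP[hI hJ']; nia.
move=> a' b' hlt; apply: dotr_mspan_eq0 (ev_sub_span_le a' b') => a b ha hb hle.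
case: (eqVneq (dotr (ev a b) v) 0) => // hnz; exfalso.
have hab : deg_lt a b m1 m2 by move: hle hlt; rewrite /deg_le /deg_lt; lia.
have := hmin (Ordinal ha, Ordinal hb); rewrite /= hnz andbT.
have -> : deg_le a b I J by move: hab hm; rewrite /deg_le /deg_lt; lia.
by rewrite leqNgt -(deg_lt_rank _ _ hb (ltn_ord m2)) hab => /(_ isT).
Qed.

Lemma deg_interval_codes I J : (I <= J)%N -> (I + J < s)%N ->
  [/\ [set N : monom s | deg_lt N.1 N.2 J I] \proper [set N : monom s | deg_le N.1 N.2 I J],
      (#|[set N : monom s | deg_le N.1 N.2 I J]| - #|[set N : monom s | deg_lt N.1 N.2 J I]|)%N
        = (J - I).+1,
      M1 (code S1 S2 [set N : monom s | deg_le N.1 N.2 I J])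
         (code S1 S2 [set N : monom s | deg_lt N.1 N.2 J I]) = ((s - I) * (s - J))%N,
      (I.+1 * J.+1 <= M1 (dual_code (code S1 S2 [set N : monom s | deg_lt N.1 N.2 J I]))
                         (dual_code (code S1 S2 [set N : monom s | deg_le N.1 N.2 I J])))%N &
      mindist (code S1 S2 [set N : monom s | deg_le N.1 N.2 I J]) = (s * (s - (I + J)))%N].
Proof.
move=> hIJ hs; have hJ : (J < s)%N by lia.
split; first exact: proper_deg_lt_le.
- exact: card_deg_le_diff.
- exact: M1_deg_interval.
- exact: M1_dual_deg_interval.
- exact: mindist_deg_le_small.
Qed.

Lemma mirror_interval_codes i j : (i <= j)%N -> (i + j < s)%N ->
  let I := (s.-1 - j)%N in let J := (s.-1 - i)%N in
  [/\ [set N : monom s | deg_lt N.1 N.2 J I] \proper [set N : monom s | deg_le N.1 N.2 I J],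
      (#|[set N : monom s | deg_le N.1 N.2 I J]| - #|[set N : monom s | deg_lt N.1 N.2 J I]|)%N
        = (j - i).+1,
      M1 (code S1 S2 [set N : monom s | deg_le N.1 N.2 I J])
         (code S1 S2 [set N : monom s | deg_lt N.1 N.2 J I]) = (i.+1 * j.+1)%N,
      ((s - i) * (s - j) <= M1 (dual_code (code S1 S2 [set N : monom s | deg_lt N.1 N.2 J I]))
                               (dual_code (code S1 S2 [set N : monom s | deg_le N.1 N.2 I J])))%N &
      mindist (code S1 S2 [set N : monom s | deg_le N.1 N.2 I J]) = (i + j).+1].
Proof.
move=> hij hs I J.
have [hIJ hJ hcard] : [/\ (I <= J)%N, (J < s)%N & (J - I).+1 = (j - i).+1].
  by split; lia.
have [eI eJ] : (s - I = j.+1 /\ s - J = i.+1)%N by lia.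
have [eI' eJ'] : (I.+1 = s - j /\ J.+1 = s - i)%N by lia.
split; first exact: proper_deg_lt_le.
- by rewrite card_deg_le_diff.
- by rewrite M1_deg_interval // eI eJ mulnC.
- by apply: leq_trans (M1_dual_deg_interval hIJ hJ); rewrite eI' eJ' mulnC.
- by rewrite mindist_deg_le_large //; lia.
Qed.

End Grid.

Unset Implicit Arguments.

Theorem mainTheorem6 (F : finFieldType) (S1 S2 : {set F}) (s sigma l : nat)
  (hS1 : #|S1| = s) (hS2 : #|S2| = s) (hsigma : (sigma < s)%N)
  (hl0 : (0 < l)%N) (hl : (l <= sigma + 1)%N) (hpar : ~~ odd l = odd sigma) :
  (let i := ((sigma + 1 - l)./2)%N in
   let j := ((sigma + l - 1)./2)%N in
   let L1 := [set N : monom s | deg_le N.1 N.2 i j] in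
   let L2 := [set N : monom s | deg_lt N.1 N.2 j i] in
   [/\ L2 \proper L1,
       (#|L1| - #|L2|)%N = l,
       M1 (code S1 S2 L1) (code S1 S2 L2)
         = ((s - (sigma + 1 - l)./2) * (s - (sigma + l - 1)./2))%N,
       (((sigma + 3 - l)./2) * ((sigma + l + 1)./2)
         <= M1 (dual_code (code S1 S2 L2)) (dual_code (code S1 S2 L1)))%N
     & (l <= sigma - 1)%N ->
       mindist (code S1 S2 L1) = (s * (s - sigma))%N /\
       (mindist (code S1 S2 L1) < M1 (code S1 S2 L1) (code S1 S2 L2))%N])
  /\
  (exists L1 L2 : {set monom s},
   [/\ L2 \proper L1,
       (#|L1| - #|L2|)%N = l,
       M1 (code S1 S2 L1) (code S1 S2 L2)
         = (((sigma + 3 - l)./2) * ((sigma + l + 1)./2))%N,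
       ((s - (sigma + 1 - l)./2) * (s - (sigma + l - 1)./2)
         <= M1 (dual_code (code S1 S2 L2)) (dual_code (code S1 S2 L1)))%N
     & (l <= sigma - 1)%N ->
       mindist (code S1 S2 L1) = (sigma + 1)%N /\
       (mindist (code S1 S2 L1) < M1 (code S1 S2 L1) (code S1 S2 L2))%N]).
Proof.
have [i [j [ei ej]]] := even_halves hl0 hl hpar.
have e3 : (sigma + 3 - l = i.+1.*2)%N by lia.
have e4 : (sigma + l + 1 = j.+1.*2)%N by lia.
rewrite ei ej e3 e4 !doubleK; cbv zeta.
have hij : (i <= j)%N by lia.
have hs : (i + j < s)%N by lia.
have pos : (l <= sigma - 1)%N -> (0 < i)%N && (0 < j)%N by lia.
have [hsum hl'] : (i + j = sigma /\ (j - i).+1 = l)%N by lia.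
rewrite -hsum in pos *; split.
- have [hpr hcard hM1 hdual hmd] := deg_interval_codes hS1 hS2 hij hs.
  split; rewrite ?hcard // => /pos/andP[i0 j0].
  by rewrite hmd hM1 ltn_mul_sub_sum ?(ltnW hs).
- have [hpr hcard hM1 hdual hmd] := mirror_interval_codes hS1 hS2 hij hs.
  exists [set N : monom s | deg_le N.1 N.2 (s.-1 - j) (s.-1 - i)],
         [set N : monom s | deg_lt N.1 N.2 (s.-1 - i) (s.-1 - j)].
  split; rewrite ?hcard // => /pos/andP[i0 j0].
  by rewrite hmd hM1 addn1 ltn_sum_mulSS.
Qed.
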